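(* Let $r\ge1$ and let $G$ be a perfect entangling matching on the vertex set $\{(a,c):1\le a\le p,\ 1\le c\le 2r\}$ such that $G$ is a vertex-disjoint union $G=\biguplus_{k=1}^r G_{j_kl_k}$, where $\{j_1,l_1,\dots,j_r,l_r\}=\{1,\dots,2r\}$ are distinct, $V(G_{j_kl_k})=\{(a,j_k):1\le a\le p\}\cup\{(a,l_k):1\le a\le p\}$, and $E(G_{j_kl_k})=\{\{(a,j_k),(i^{(k)}_a,l_k)\}:a=1,\dots,p\}$ with $i^{(k)}_a\ne a$ for all $a$ and $a\mapsto i^{(k)}_a$ a permutation of $\{1,\dots,p\}$. Then $\rho(G)$ is separable in $\mathbb{C}^p_A\otimes\mathbb{C}^{2r}_B$ and $\Delta(G)=\Delta(G^{\Gamma_B})$.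
   Context: A perfect matching is a simple graph in which every vertex lies in exactly one edge; an edge $\{(i,j),(i',j')\}$ is entangled if $i\ne i'$ and $j\ne j'$; a perfect entangling matching is a perfect matching all of whose edges are entangled. For a simple graph: $\Delta(G)$ is the diagonal degree matrix, $M(G)$ the adjacency matrix, $L(G)=\Delta(G)-M(G)$, $\rho(G)=\frac{1}{2|E|}L(G)$. Vertex $(a,c)$ is identified with $|a\rangle\otimes|c\rangle$ in the standard bases of $\mathbb{C}^p_A$ and $\mathbb{C}^{2r}_B$. The partial transpose $G^{\Gamma_B}$ has the same vertex set, and $\{(i,j),(k,l)\}$ is an edge of $G^{\Gamma_B}$ iff $\{(i,l),(k,j)\}$ is an edge of $G$. Separable means a convex combination of product states. *)

From HB Require Import structures.
From mathcomp Require Import all_boot all_order all_algebra all_fingroup.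
Set Implicit Arguments. Unset Strict Implicit. Unset Printing Implicit Defensive.
Import Order.TTheory GRing.Theory Num.Theory.
Local Open Scope ring_scope.

Definition vtx (p n : nat) := ('I_p * 'I_n)%type.

Definition simple_graph (p n : nat) (e : rel (vtx p n)) : Prop :=
  (forall x y, e x y = e y x) /\ (forall x, ~~ e x x).

Definition perfect_matching (p n : nat) (e : rel (vtx p n)) : Prop :=
  simple_graph e /\ forall x, #|[set y | e x y]| = 1%N.

Definition entangled_edge (p n : nat) (x y : vtx p n) : bool :=
  (x.1 != y.1) && (x.2 != y.2).

Definition perfect_entangling_matching (p n : nat) (e : rel (vtx p n)) : Prop :=
  perfect_matching e /\ forall x y, e x y -> entangled_edge x y.

Definition ptransB (p n : nat) (e : rel (vtx p n)) : rel (vtx p n) :=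
  fun x y => e (x.1, y.2) (y.1, x.2).

Definition degree (p n : nat) (e : rel (vtx p n)) (x : vtx p n) : nat :=
  #|[set y | e x y]|.

Definition nedges (p n : nat) (e : rel (vtx p n)) : nat :=
  (#|[set u : vtx p n * vtx p n | e u.1 u.2]| %/ 2)%N.

(* The vertex (a,c) is identified with |a> (x) |c>, i.e. with the index
   mxvec_index a c = a * n + c of 'I_(p * n). *)
Definition vof (p n : nat) (k : 'I_(p * n)) : vtx p n :=
  enum_val (cast_ord (esym (mxvec_cast p n)) k).

Section Mats.
Variable C : numClosedFieldType.

Definition kron (p n : nat) (A : 'M[C]_p) (B : 'M[C]_n) : 'M[C]_(p * n) :=
  \matrix_(i, j) (A (vof i).1 (vof j).1 * B (vof i).2 (vof j).2).

Definition degmx (p n : nat) (e : rel (vtx p n)) : 'M[C]_(p * n) :=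
  \matrix_(i, j) (if i == j then (degree e (vof i))%:R else 0).

Definition adjmx (p n : nat) (e : rel (vtx p n)) : 'M[C]_(p * n) :=
  \matrix_(i, j) (e (vof i) (vof j))%:R.

Definition laplacian (p n : nat) (e : rel (vtx p n)) : 'M[C]_(p * n) :=
  degmx e - adjmx e.

Definition rho_graph (p n : nat) (e : rel (vtx p n)) : 'M[C]_(p * n) :=
  ((2 * nedges e)%:R)^-1 *: laplacian e.

Definition adjointmx (m n : nat) (A : 'M[C]_(m, n)) : 'M[C]_(n, m) :=
  (map_mx Num.conj A)^T.

Definition hermitian (n : nat) (A : 'M[C]_n) : Prop := adjointmx A = A.

Definition psd (n : nat) (A : 'M[C]_n) : Prop :=
  hermitian A /\ forall v : 'cV[C]_n, 0 <= (adjointmx v *m A *m v) 0 0.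

Definition density (n : nat) (A : 'M[C]_n) : Prop := psd A /\ \tr A = 1.

Definition separable (p n : nat) (rho : 'M[C]_(p * n)) : Prop :=
  exists (k : nat) (lam : 'I_k -> C) (rA : 'I_k -> 'M[C]_p) (rB : 'I_k -> 'M[C]_n),
    [/\ forall i, 0 <= lam i,
        \sum_(i < k) lam i = 1,
        forall i, density (rA i) /\ density (rB i)
      & rho = \sum_(i < k) lam i *: kron (rA i) (rB i)].
End Mats.

From mathcomp Require Import all_boot all_order all_algebra all_fingroup.
From mathcomp Require Import cyclic ring.
From mathcomp Require separable cyclotomic.
Set Implicit Arguments. Unset Strict Implicit. Unset Printing Implicit Defensive.
Import Order.TTheory GRing.Theory Num.Theory.
Local Open Scope ring_scope.

(* Let N be an exponent of the symmetric group on p letters (here N = p!) and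
   z a primitive N-th root of unity. For a permutation sigma, the vectors
   x_{a0,t} = sum_s z^(t s) |sigma^s a0> satisfy x_{a0,t}(sigma a) = z^t x_{a0,t}(a)
   and, by orthogonality of the characters t |-> z^(t s), form a tight frame:
   sum_{a0,t} x_{a0,t} x_{a0,t}^* = N^2 Id. With y_t = |j> - conj(z^t) |l> this
   gives sum_{a0,t} x_{a0,t} x_{a0,t}^* (x) y_t y_t^* = N^2 L(G_{jl}). Summing over
   the r blocks writes rho(G) as a nonnegative combination of products of rank-one
   matrices, hence as a separable state. Both degree matrices are the identity:
   G is a perfect matching, and so is G^Gamma, whose block on columns j, l is the
   matching along sigma^-1. *)

Lemma closed_prim_root_exists (C : numClosedFieldType) n :
  (0 < n)%N -> {z : C | n.-primitive_root z}.
Proof.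
move=> n_gt0; have [rs Dp] := closed_field_poly_normal ('X^n - 1 : {poly C}).
apply/sigW; rewrite (monicP _) ?monicXnsubC // scale1r in Dp.
have rs1 : all n.-unity_root rs by apply/allP=> z; rewrite -root_prod_XsubC -Dp.
have sz_rs : (n < (size rs).+1)%N by rewrite -(size_prod_XsubC rs id) -Dp size_XnsubC.
have [|z] := hasP (has_prim_root n_gt0 rs1 _ sz_rs); last by exists z.
by rewrite -separable.separable_prod_XsubC -Dp cyclotomic.separable_Xn_sub_1 // pnatr_eq0 -lt0n.
Qed.

Section PrimitiveRoot.
Variables (C : numClosedFieldType) (N : nat) (z : C).
Hypothesis zP : N.-primitive_root z.

Let N_gt0 : (0 < N)%N := prim_order_gt0 zP.

Let z_neq0 : z != 0.
Proof. by rewrite (prim_root_eq0 zP) -lt0n. Qed.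

Lemma prim_root_conj : z^* = z^-1.
Proof.
have z_norm1 : `|z| = 1.
  apply/eqP; rewrite -(pexpr_eq1 N_gt0) ?normr_ge0 //.
  by rewrite -normrX prim_expr_order // normr1.
by rewrite invC_norm z_norm1 expr1n invr1 mul1r.
Qed.

Lemma prim_root_expr_mul_conj t : z ^+ t * (z ^+ t)^* = 1.
Proof.
by rewrite rmorphXn /= prim_root_conj -exprMn mulfV ?expr1n.
Qed.

Lemma prim_root_orthogonality (s s' : 'I_N) :
  \sum_(t < N) z ^+ (t * s) * (z ^+ (t * s'))^* = (s == s')%:R *+ N.
Proof.
pose w := z ^+ s * (z ^+ s')^*.
have -> : \sum_(t < N) z ^+ (t * s) * (z ^+ (t * s'))^* = \sum_(t < N) w ^+ t.
  by apply: eq_bigr => t _; rewrite exprMn -rmorphXn -!exprM !(mulnC t).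
have [eq_ss'|neq_ss'] := eqVneq s s'.
  rewrite /w eq_ss' prim_root_expr_mul_conj.
  by under eq_bigr do rewrite expr1n; rewrite sumr_const card_ord.
have w_neq1 : w - 1 != 0.
  have zs : z ^+ s = w * z ^+ s'.
    by rewrite /w -mulrA [_^* * _]mulrC prim_root_expr_mul_conj mulr1.
  rewrite subr_eq0; apply: contra neq_ss' => /eqP w1.
  by rewrite -val_eqE /= -(modn_small (ltn_ord s)) -(modn_small (ltn_ord s'))
    -(eq_prim_root_expr zP) zs w1 mul1r.
have wN : w ^+ N = 1.
  rewrite /w exprMn -rmorphXn -!exprM !(mulnC _ N) !exprM (prim_expr_order zP).
  by rewrite !expr1n rmorph1 mulr1.
have := subrX1 w N; rewrite wN subrr => /esym/eqP.
by rewrite mulf_eq0 (negPf w_neq1) => /eqP->; rewrite mul0rn.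
Qed.

End PrimitiveRoot.

Section PermEigvec.
Variables (C : numClosedFieldType) (N : nat) (z : C) (p : nat) (sigma : {perm 'I_p}).
Hypothesis zP : N.-primitive_root z.

Definition perm_eigvec (a0 : 'I_p) (t : 'I_N) (a : 'I_p) : C :=
  \sum_(s < N) z ^+ (t * s) * ((sigma ^+ s)%g a0 == a)%:R.

Lemma sum_perm_eigvec_conj a b :
  \sum_a0 \sum_(t < N) perm_eigvec a0 t a * (perm_eigvec a0 t b)^* =
  (a == b)%:R *+ (N * N).
Proof.
transitivity (\sum_a0 \sum_(s < N)
    ((sigma ^+ s)%g a0 == a)%:R * ((sigma ^+ s)%g a0 == b)%:R *+ N : C).
  apply: eq_bigr => a0 _.
  transitivity (\sum_(t < N) \sum_(s < N) \sum_(s' < N)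
      ((sigma ^+ s)%g a0 == a)%:R * ((sigma ^+ s')%g a0 == b)%:R *
      (z ^+ (t * s) * (z ^+ (t * s'))^*)).
    apply: eq_bigr => t _; rewrite /perm_eigvec rmorph_sum mulr_suml.
    apply: eq_bigr => s _; rewrite mulr_sumr; apply: eq_bigr => s' _.
    by rewrite rmorphM /= conjC_nat; ring.
  rewrite exchange_big; apply: eq_bigr => s _; rewrite exchange_big /=.
  under eq_bigr => s' _ do rewrite -mulr_sumr (prim_root_orthogonality zP).
  rewrite (bigD1 s) //= eqxx big1 ?addr0 => [|s' /negPf ne].
    by rewrite mulrnAr mulr1.
  by rewrite (eq_sym s) ne mul0rn mulr0.
rewrite exchange_big /=.
under eq_bigr => s _.
  rewrite sumrMnl (reindex_inj (@perm_inj _ (sigma ^+ s)^-1)%g).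
  under eq_bigr => a0 _ do rewrite permKV.
  rewrite (bigD1 a) //= eqxx mul1r big1 ?addr0 => [|a0 /negPf ne]; last by rewrite ne mul0r.
  over.
by rewrite sumr_const card_ord -mulrnA.
Qed.

Hypothesis sigmaN : (sigma ^+ N = 1)%g.

Lemma perm_eigvec_perm a0 t a : perm_eigvec a0 t (sigma a) = z ^+ t * perm_eigvec a0 t a.
Proof.
rewrite /perm_eigvec mulr_sumr (reindex_inj (@ordS_inj N)) /=.
apply: eq_bigr => s _.
have ztN : (z ^+ t) ^+ N = 1 by rewrite -exprM mulnC exprM (prim_expr_order zP) expr1n.
rewrite exprM (expr_mod _ ztN) expg_mod // expgSr permM (inj_eq perm_inj).
by rewrite exprS -exprM mulrA.
Qed.

Lemma sum_perm_eigvec_conj_shift a b :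
  \sum_a0 \sum_(t < N) z ^+ t * perm_eigvec a0 t a * (perm_eigvec a0 t b)^* =
  (sigma a == b)%:R *+ (N * N).
Proof.
rewrite -sum_perm_eigvec_conj; apply: eq_bigr => a0 _; apply: eq_bigr => t _.
by rewrite perm_eigvec_perm.
Qed.

Lemma sum_perm_eigvec_conj_shiftV a b :
  \sum_a0 \sum_(t < N) (z ^+ t)^* * perm_eigvec a0 t a * (perm_eigvec a0 t b)^* =
  (a == sigma b)%:R *+ (N * N).
Proof.
have := congr1 Num.conj (sum_perm_eigvec_conj_shift b a).
rewrite rmorphMn /= conjC_nat eq_sym => <-; rewrite rmorph_sum.
apply: eq_bigr => a0 _; rewrite rmorph_sum; apply: eq_bigr => t _.
by rewrite !rmorphM /= conjCK mulrAC.
Qed.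

End PermEigvec.

Definition perm_matching (p n : nat) (sigma : {perm 'I_p}) (j l : 'I_n) : rel (vtx p n) :=
  fun x y => (x.2 == j) && (y.2 == l) && (y.1 == sigma x.1)
          || (x.2 == l) && (y.2 == j) && (x.1 == sigma y.1).

Section PermMatchingLaplacian.
Variables (C : numClosedFieldType) (p n : nat) (sigma : {perm 'I_p}) (j l : 'I_n).
Hypothesis neq_jl : j != l.

Definition perm_matching_lap (x y : vtx p n) : C :=
  ((x == y) && ((x.2 == j) || (x.2 == l)))%:R - (perm_matching sigma j l x y)%:R.

Lemma perm_matching_lapE a b c d :
  perm_matching_lap (a, c) (b, d) =
    (a == b)%:R * ((c == j)%:R * (d == j)%:R + (c == l)%:R * (d == l)%:R)
    - (b == sigma a)%:R * (c == j)%:R * (d == l)%:R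
    - (a == sigma b)%:R * (c == l)%:R * (d == j)%:R.
Proof.
rewrite /perm_matching_lap /perm_matching /= xpair_eqE.
have [->|neq_cj] := eqVneq c j.
  rewrite (negPf neq_jl) (eq_sym j d) /=.
  by case: (a == b); case: (d == j); case: (d == l); case: (b == sigma a); rewrite /=; ring.
have [->|neq_cl] := eqVneq c l.
  rewrite (eq_sym l d) /=.
  by case: (a == b); case: (d == j); case: (d == l); case: (a == sigma b); rewrite /=; ring.
by rewrite andbF /=; ring.
Qed.

Variables (N : nat) (z : C).
Hypothesis zP : N.-primitive_root z.
Hypothesis sigmaN : (sigma ^+ N = 1)%g.

Definition pair_vec (t : 'I_N) (c : 'I_n) : C := (c == j)%:R - (z ^+ t)^* * (c == l)%:R.

Lemma perm_matching_lap_fourier a b c d :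
  perm_matching_lap (a, c) (b, d) *+ (N * N) =
  \sum_a0 \sum_(t < N) perm_eigvec z sigma a0 t a * (perm_eigvec z sigma a0 t b)^*
                     * (pair_vec t c * (pair_vec t d)^*).
Proof.
have pair_vec_conj t : pair_vec t c * (pair_vec t d)^* =
    (c == j)%:R * (d == j)%:R + (c == l)%:R * (d == l)%:R
    - z ^+ t * ((c == j)%:R * (d == l)%:R) - (z ^+ t)^* * ((c == l)%:R * (d == j)%:R).
  rewrite /pair_vec rmorphB rmorphM /= !conjC_nat conjCK.
  transitivity ((c == j)%:R * (d == j)%:R + (z ^+ t * (z ^+ t)^*) * ((c == l)%:R * (d == l)%:R)
    - z ^+ t * ((c == j)%:R * (d == l)%:R) - (z ^+ t)^* * ((c == l)%:R * (d == j)%:R) : C).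
    by ring.
  by rewrite (prim_root_expr_mul_conj zP) mul1r.
pose x (a0 : 'I_p) (t : 'I_N) a := perm_eigvec z sigma a0 t a.
transitivity (((c == j)%:R * (d == j)%:R + (c == l)%:R * (d == l)%:R)
      * \sum_a0 \sum_(t < N) x a0 t a * (x a0 t b)^*
    - (c == j)%:R * (d == l)%:R * \sum_a0 \sum_(t < N) z ^+ t * x a0 t a * (x a0 t b)^*
    - (c == l)%:R * (d == j)%:R
      * \sum_a0 \sum_(t < N) (z ^+ t)^* * x a0 t a * (x a0 t b)^*); last first.
  rewrite !mulr_sumr -!sumrB; apply: eq_bigr => a0 _.
  rewrite !mulr_sumr -!sumrB; apply: eq_bigr => t _.
  by rewrite /x pair_vec_conj; ring.
rewrite sum_perm_eigvec_conj // sum_perm_eigvec_conj_shift //.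
rewrite sum_perm_eigvec_conj_shiftV // perm_matching_lapE (eq_sym (sigma a)).
by rewrite !mulrnAr -!mulrnBl; congr (_ *+ _); ring.
Qed.

End PermMatchingLaplacian.

Lemma sum_pair (R : nmodType) (I J : finType) (F : I * J -> R) :
  \sum_u F u = \sum_i \sum_j F (i, j).
Proof. by rewrite pair_bigA; apply: eq_bigr => -[]. Qed.

Section PermMatchingUnion.
Variable C : numClosedFieldType.
Variables (p n r : nat) (e : rel (vtx p n)).
Variables (jj ll : 'I_r -> 'I_n) (sigma : 'I_r -> {perm 'I_p}).
Hypothesis jj_inj : injective jj.
Hypothesis ll_inj : injective ll.
Hypothesis jj_neq_ll : forall k k', jj k != ll k'.
Hypothesis edgeE : forall x y, e x y <->
  exists k a, (x = (a, jj k) /\ y = (sigma k a, ll k)) \/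
              (y = (a, jj k) /\ x = (sigma k a, ll k)).

Lemma edge_perm_matching k x y : (x.2 == jj k) || (x.2 == ll k) ->
  e x y = perm_matching (sigma k) (jj k) (ll k) x y.
Proof.
case: x y => [a c] [b d] /= c_k; apply/idP/idP => [/edgeE [k' [a' edge_k']] |].
  move: c_k; case: edge_k' => [[[-> ->] [-> ->]] | [[-> ->] [-> ->]]] /=.
    rewrite (inj_eq jj_inj) (negPf (jj_neq_ll _ _)) orbF => /eqP->.
    by rewrite /perm_matching /= !eqxx.
  rewrite (inj_eq ll_inj) eq_sym (negPf (jj_neq_ll _ _)) /= => /eqP->.
  by rewrite /perm_matching /= !eqxx orbT.
rewrite /perm_matching /= => /orP [] /andP [/andP [/eqP-> /eqP->] /eqP->];
  apply/edgeE; exists k.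
  by exists a; left.
by exists b; right.
Qed.

Hypothesis e_sym : symmetric e.
Hypothesis cover : forall c : 'I_n, exists k, c = jj k \/ c = ll k.

Lemma degree_ptransB x : degree (ptransB e) x = 1%N.
Proof.
case: x => a c; have [k c_k] := cover c.
have edge_k b d : ptransB e (a, c) (b, d) = perm_matching (sigma k) (jj k) (ll k) (b, c) (a, d).
  rewrite /ptransB /= e_sym (@edge_perm_matching k) //=.
  by case: c_k => ->; rewrite eqxx ?orbT.
case: c_k => c_k; subst c.
  rewrite /degree (_ : [set y | _] = [set ((sigma k)^-1 a, ll k)]%g) ?cards1 //.
  apply/setP => -[b d]; rewrite !inE edge_k /perm_matching /=.
  rewrite eqxx (negPf (jj_neq_ll _ _)) xpair_eqE andbC orbF /=.
  by rewrite -(inj_eq (@perm_inj _ (sigma k))) permKV eq_sym.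
rewrite /degree (_ : [set y | _] = [set (sigma k a, jj k)]) ?cards1 //.
apply/setP => -[b d]; rewrite !inE edge_k /perm_matching /= eqxx.
by rewrite (eq_sym (ll k)) (negPf (jj_neq_ll _ _)) xpair_eqE /= andbC.
Qed.

Lemma sum_perm_matching_lap x y :
  \sum_k perm_matching_lap C (sigma k) (jj k) (ll k) x y = (x == y)%:R - (e x y)%:R.
Proof.
have [k0 c_k0] := cover x.2.
have in_k0 : (x.2 == jj k0) || (x.2 == ll k0) by case: c_k0 => ->; rewrite eqxx ?orbT.
rewrite (bigD1 k0) //= big1 ?addr0 => [|k neq_k].
  by rewrite /perm_matching_lap in_k0 andbT (edge_perm_matching _ in_k0).
have [out_j out_l] : x.2 != jj k /\ x.2 != ll k.
  case: c_k0 => ->; split.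
  - by rewrite (inj_eq jj_inj) eq_sym.
  - exact: jj_neq_ll.
  - by rewrite eq_sym jj_neq_ll.
  - by rewrite (inj_eq ll_inj) eq_sym.
rewrite /perm_matching_lap /perm_matching (negPf out_j) (negPf out_l) /=.
by rewrite andbF subrr.
Qed.

Variables (N : nat) (z : C).
Hypothesis zP : N.-primitive_root z.
Hypothesis sigmaN : forall k, (sigma k ^+ N = 1)%g.

Lemma laplacian_fourier x y :
  (N * N)%:R * ((x == y)%:R - (e x y)%:R) =
  \sum_(i : 'I_r * ('I_p * 'I_N))
    perm_eigvec z (sigma i.1) i.2.1 i.2.2 x.1 * (perm_eigvec z (sigma i.1) i.2.1 i.2.2 y.1)^*
    * (pair_vec (jj i.1) (ll i.1) z i.2.2 x.2 * (pair_vec (jj i.1) (ll i.1) z i.2.2 y.2)^*).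
Proof.
rewrite mulr_natl -sum_perm_matching_lap -sumrMnl sum_pair; apply: eq_bigr => k _.
case: x y => [a c] [b d]; rewrite (perm_matching_lap_fourier (jj_neq_ll k k) zP) //.
by rewrite sum_pair.
Qed.

End PermMatchingUnion.

Lemma vof_bij p n : bijective (@vof p n).
Proof.
exists (fun x => mxvec_index x.1 x.2) => [k | [a c]]; rewrite /vof /mxvec_index /=.
  by rewrite -surjective_pairing enum_valK cast_ordKV.
by rewrite cast_ordK enum_rankK.
Qed.

Lemma sum_vof (R : nmodType) p n (F : vtx p n -> R) :
  \sum_(k < p * n) F (vof k) = \sum_(x : vtx p n) F x.
Proof. by rewrite (reindex (@vof p n)) //; apply: onW_bij; apply: vof_bij. Qed.

Section GraphMatrices.
Variables (C : numClosedFieldType) (p n : nat) (e : rel (vtx p n)).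

Lemma laplacianE k l :
  laplacian C e k l = (vof k == vof l)%:R * (degree e (vof k))%:R - (e (vof k) (vof l))%:R.
Proof.
by rewrite !mxE (bij_eq (@vof_bij p n)); case: eqP => _; rewrite ?mul1r ?mul0r.
Qed.

Lemma card_adjacent_pairs : #|[set u : vtx p n * vtx p n | e u.1 u.2]| = (\sum_x degree e x)%N.
Proof.
rewrite -sum1_card (eq_bigl (fun u => xpredT u.1 && e u.1 u.2)) => [|u]; last by rewrite inE.
by rewrite -(pair_big_dep xpredT e (fun _ _ => 1%N)); apply: eq_bigr => x _; rewrite sum1dep_card.
Qed.

Lemma tr_rho_graph_perfect_matching :
  perfect_matching e -> (0 < p * n)%N -> ~~ odd (p * n) -> \tr (rho_graph C e) = 1.
Proof.
move=> [[_ e_irr] deg1] pn_gt0 pn_even.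
have sum_deg : (\sum_x degree e x)%N = (p * n)%N.
  rewrite (eq_bigr (fun _ => 1%N)) => [|x _]; last exact: deg1.
  by rewrite sum1_card card_prod !card_ord.
rewrite /rho_graph mxtraceZ /mxtrace.
have -> : (2 * nedges e)%N = (p * n)%N.
  by rewrite /nedges card_adjacent_pairs sum_deg mulnC divnK // dvdn2.
under eq_bigr => k _ do rewrite laplacianE eqxx (negPf (e_irr _)) mul1r subr0.
rewrite (sum_vof (fun x => (degree e x)%:R)) -natr_sum sum_deg mulVf //.
by rewrite pnatr_eq0 -lt0n.
Qed.

End GraphMatrices.

Section Kronecker.
Variables (C : numClosedFieldType) (p n : nat).

Lemma mxtrace_kron (A : 'M[C]_p) (B : 'M[C]_n) : \tr (kron A B) = \tr A * \tr B.
Proof.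
rewrite /mxtrace; under eq_bigr do rewrite mxE.
rewrite (sum_vof (fun x => A x.1 x.1 * B x.2 x.2)) -(pair_bigA _ (fun a c => A a a * B c c)).
by rewrite mulr_suml; apply: eq_bigr => a _; rewrite mulr_sumr.
Qed.

Lemma kronZ a b (A : 'M[C]_p) (B : 'M[C]_n) : kron (a *: A) (b *: B) = (a * b) *: kron A B.
Proof. by apply/matrixP => k l; rewrite !mxE; ring. Qed.

Lemma kron0l (B : 'M[C]_n) : kron (0 : 'M[C]_p) B = 0.
Proof. by apply/matrixP => k l; rewrite !mxE mul0r. Qed.

Lemma kron0r (A : 'M[C]_p) : kron A (0 : 'M[C]_n) = 0.
Proof. by apply/matrixP => k l; rewrite !mxE mulr0. Qed.

End Kronecker.

Section RankOneProducts.
Variable C : numClosedFieldType.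

Definition outer m (x : 'I_m -> C) : 'M[C]_m := \matrix_(u, v) (x u * (x v)^*).

Definition sqnorm m (x : 'I_m -> C) : C := \sum_u x u * (x u)^*.

Lemma sqnorm_ge0 m (x : 'I_m -> C) : 0 <= sqnorm x.
Proof. by apply: sumr_ge0 => u _; rewrite mul_conjC_ge0. Qed.

Lemma outer_sqnorm_eq0 m (x : 'I_m -> C) : sqnorm x = 0 -> outer x = 0.
Proof.
move=> /psumr_eq0P x0; apply/matrixP => u v; rewrite !mxE.
suff -> : x u = 0 by rewrite mul0r.
by apply/eqP; rewrite -mul_conjC_eq0 x0 // => w _; rewrite mul_conjC_ge0.
Qed.

Lemma mxtrace_outer m (x : 'I_m -> C) : \tr (outer x) = sqnorm x.
Proof. by apply: eq_bigr => u _; rewrite mxE. Qed.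

Lemma psd_scale_outer m (s : C) (x : 'I_m -> C) : 0 <= s -> psd (s *: outer x).
Proof.
move=> s_ge0; have s_conj : s^* = s by rewrite conj_Creal // ger0_real.
split; first by apply/matrixP => u v; rewrite !mxE !rmorphM /= conjCK s_conj; ring.
move=> w; pose y := \sum_u (w u 0)^* * x u.
suff -> : (adjointmx w *m (s *: outer x) *m w) 0 0 = s * (y * y^*).
  by rewrite mulr_ge0 // mul_conjC_ge0.
rewrite [y * _]mulrC /y rmorph_sum !mxE mulr_suml mulr_sumr; apply: eq_bigr => v _.
rewrite !mxE mulr_suml mulr_sumr mulr_sumr; apply: eq_bigr => u _.
by rewrite !mxE !rmorphM /= conjCK; ring.
Qed.

(* The value for [sqnorm x = 0] is arbitrary: such terms get weight zero below. *)
Definition normalized_outer m (u0 : 'I_m) (x : 'I_m -> C) : 'M[C]_m :=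
  if sqnorm x == 0 then outer (fun u => (u == u0)%:R) else (sqnorm x)^-1 *: outer x.

Lemma density_normalized_outer m (u0 : 'I_m) x : density (normalized_outer u0 x).
Proof.
rewrite /normalized_outer; case: eqP => [_ | /eqP x_neq0].
  rewrite -[outer _]scale1r; split; first exact: psd_scale_outer.
  rewrite mxtraceZ mxtrace_outer mul1r /sqnorm (bigD1 u0) //= big1 => [|u /negPf->].
    by rewrite eqxx conjC1 mulr1 addr0.
  by rewrite mul0r.
split; first by apply: psd_scale_outer; rewrite invr_ge0 sqnorm_ge0.
by rewrite mxtraceZ mxtrace_outer mulVf.
Qed.

Lemma separable_sum_outer p n (I : finType) (c : I -> C)
    (xs : I -> 'I_p -> C) (ys : I -> 'I_n -> C) (rho : 'M[C]_(p * n)) :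
  (forall i, 0 <= c i) -> \tr rho = 1 ->
  rho = \sum_i c i *: kron (outer (xs i)) (outer (ys i)) ->
  separable rho.
Proof.
move=> c_ge0 tr_rho1 rhoE.
have [k0 _] : exists k0 : 'I_(p * n), true.
  case: (pickP (fun _ : 'I_(p * n) => true)) => [k0 _ | none]; first by exists k0.
  by move: tr_rho1; rewrite /mxtrace big_pred0 // => /esym/eqP; rewrite oner_eq0.
pose lam i := c i * sqnorm (xs i) * sqnorm (ys i).
have termE i : c i *: kron (outer (xs i)) (outer (ys i)) =
    lam i *: kron (normalized_outer (vof k0).1 (xs i)) (normalized_outer (vof k0).2 (ys i)).
  rewrite /lam /normalized_outer; case: eqP => [x0 | /eqP x_neq0].
    by rewrite (outer_sqnorm_eq0 x0) kron0l x0 mulr0 mul0r !scale0r scaler0.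
  case: eqP => [y0 | /eqP y_neq0].
    by rewrite (outer_sqnorm_eq0 y0) kron0r y0 mulr0 !scale0r scaler0.
  by rewrite kronZ scalerA; congr (_ *: _); field; apply/andP.
exists #|I|, (fun j => lam (enum_val j)),
  (fun j => normalized_outer (vof k0).1 (xs (enum_val j))),
  (fun j => normalized_outer (vof k0).2 (ys (enum_val j))); split.
- by move=> j; rewrite !mulr_ge0 ?sqnorm_ge0.
- rewrite -(big_enum_val lam) -tr_rho1 rhoE raddf_sum; apply: eq_bigr => i _.
  by rewrite /= mxtraceZ mxtrace_kron !mxtrace_outer mulrA.
- by move=> j; split; apply: density_normalized_outer.
by rewrite rhoE (big_enum_val (fun i => c i *: _)); apply: eq_bigr => j _; rewrite termE.
Qed.

End RankOneProducts.

Unset Implicit Arguments.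
Theorem mainTheorem9 (C : numClosedFieldType) (p r : nat) (hp : (0 < p)%N) (hr : (0 < r)%N)
    (e : rel (vtx p (2 * r)))
    (jj ll : 'I_r -> 'I_(2 * r)) (sigma : 'I_r -> {perm 'I_p}) :
    perfect_entangling_matching e ->
    injective jj -> injective ll -> (forall k k', jj k != ll k') ->
    (forall c : 'I_(2 * r), exists k, c = jj k \/ c = ll k) ->
    (forall k a, sigma k a != a) ->
    (forall x y, e x y <->
       exists k a, (x = (a, jj k) /\ y = (sigma k a, ll k)) \/
                   (y = (a, jj k) /\ x = (sigma k a, ll k))) ->
    separable (rho_graph C e) /\ degmx C e = degmx C (ptransB e).
Proof.
move=> [e_pm _] jj_inj ll_inj jj_neq_ll cover _ edgeE.
have [[e_sym _] deg1] := e_pm.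
split; last first.
  apply/matrixP => i j; rewrite !mxE; case: eqP => // _.
  by rewrite (degree_ptransB jj_inj ll_inj jj_neq_ll edgeE e_sym cover) /degree deg1.
pose N := #|{perm 'I_p}|.
have N_gt0 : (0 < N)%N by apply/card_gt0P; exists 1%g.
have sigmaN k : (sigma k ^+ N = 1)%g by rewrite /N -cardsT expg_cardG ?inE.
have [z zP] := closed_prim_root_exists C N_gt0.
pose K : C := ((2 * nedges e)%:R)^-1 * ((N * N)%:R)^-1.
apply: (@separable_sum_outer C _ _ _ (fun _ : 'I_r * ('I_p * 'I_N) => K)
  (fun i => perm_eigvec z (sigma i.1) i.2.1 i.2.2) (fun i => pair_vec (jj i.1) (ll i.1) z i.2.2)).
- by move=> _; rewrite mulr_ge0 // invr_ge0 ler0n.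
- apply: tr_rho_graph_perfect_matching => //; first by rewrite !muln_gt0 hp hr.
  by rewrite mulnCA oddM.
apply/matrixP => k l; rewrite summxE /rho_graph mxE laplacianE /degree deg1 mulr1.
under [RHS]eq_bigr do rewrite !mxE.
rewrite -mulr_sumr -(laplacian_fourier jj_inj ll_inj jj_neq_ll edgeE cover zP sigmaN).
by rewrite /K -mulrA mulKf // pnatr_eq0 muln_eq0 negb_or -lt0n N_gt0.
Qed.
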